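(* Let $\phi$ be an LTL formula. (f) Every finite chain of $\mathbf{AX}^{gen}$-atoms of $\phi$ is extensible (i.e., is a prefix of) an acceptable chain of $\mathbf{AX}^{gen}$-atoms, finite or infinite. (g) Every finite chain of $\mathbf{AX}^{inf}$-atoms of $\phi$ is extensible to an infinite acceptable chain of $\mathbf{AX}^{inf}$-atoms. (h) Every finite chain of $\mathbf{AX}^{fin}$-atoms of $\phi$ is extensible to a finite acceptable chain of $\mathbf{AX}^{fin}$-atoms.
   Context: LTL formulas: grammar $\phi ::= p\mid\neg\phi\mid\phi\wedge\psi\mid\bigcirc\phi\mid\phi\,\mathcal{U}\,\psi$ over propositions $p\in\Phi_0$; $\vee,\Rightarrow$ standard abbreviations; $\mathit{true}$ a fixed tautology, $\mathit{false}:=\neg\mathit{true}$, $\Diamond\phi:=\mathit{true}\,\mathcal{U}\,\phi$, $\overline{\bigcirc}\phi:=\neg\bigcirc\neg\phi$. Axiomatizations: $\mathbf{AX}^{gen}$ consists of Prop (all propositional tautology instances), MP (from $\phi$, $\phi\Rightarrow\psi$ infer $\psi$), T1: $\bigcirc\phi\wedge\bigcirc(\phi\Rightarrow\psi)\Rightarrow\bigcirc\psi$, T2': $\phi\,\mathcal{U}\,\psi\Leftrightarrow\psi\vee(\phi\wedge\overline{\bigcirc}(\phi\,\mathcal{U}\,\psi))$, T3': $\bigcirc\phi\Leftrightarrow(\bigcirc\mathit{false}\vee\overline{\bigcirc}\phi)$, RT1 (from $\phi$ infer $\bigcirc\phi$), RT2 (from $\phi'\Rightarrow\neg\psi\wedge\bigcirc\phi'$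 infer $\phi'\Rightarrow\neg(\phi\,\mathcal{U}\,\psi)$). $\mathbf{AX}^{inf}$ adds $\neg\bigcirc\mathit{false}$; $\mathbf{AX}^{fin}$ adds $\Diamond\bigcirc\mathit{false}$. For an axiomatization $ax$, a formula is $ax$-consistent if its negation is not provable in $ax$; a finite set is consistent if its conjunction is. Closure: $Cl'(\phi)$ is the smallest set $S$ with $\phi\in S$; $\mathit{true}\,\mathcal{U}\,\bigcirc\mathit{false}\in S$; $\neg\psi\in S\Rightarrow\psi\in S$; $\psi_1\wedge\psi_2\in S\Rightarrow\psi_1,\psi_2\in S$; $\bigcirc\psi\in S\Rightarrow\psi\in S$; $\bigcirc\neg\psi\in S\Rightarrow\bigcirc\psi\in S$; $\psi_1\,\mathcal{U}\,\psi_2\in S\Rightarrow\psi_1,\psi_2,\overline{\bigcirc}(\psi_1\,\mathcal{U}\,\psi_2)\in S$. $Cl(\phi)=Cl'(\phi)\cup\{\neg\psi:\psi\in Cl'(\phi)\}$. An $ax$-atom of $\phi$ is a maximal $ax$-consistent subset of $Cl(\phi)$; $\widehat V$ is the conjunction of its formulas. $V\to_{ax}W$ iff $\widehat V\wedge\overline{\bigcirc}\widehat W$ is $ax$-consistent. A chain of $ax$-atoms is a finite or infinite sequence $V_0,V_1,\dots$ with $V_i\to_{ax}V_{i+1}$ for consecutive indices. A chain is acceptable if for every index $i$ and every $\psi_1\,\mathcal{U}\,\psi_2\in V_i$ there is an index $j\ge i$ of the chain with $\psi_2\in V_j$ and $\psi_1\in V_i,\dots,V_{j-1}$. *)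

From Stdlib Require Import List Arith.
Import ListNotations.

Inductive form : Type :=
| Var : nat -> form
| Neg : form -> form
| And : form -> form -> form
| Next : form -> form
| Until : form -> form -> form.

Definition Or (a b : form) : form := Neg (And (Neg a) (Neg b)).
Definition Imp (a b : form) : form := Or (Neg a) b.
Definition Iff (a b : form) : form := And (Imp a b) (Imp b a).
Definition ftrue : form := Neg (And (Var 0) (Neg (Var 0))).
Definition ffalse : form := Neg ftrue.
Definition Ev (a : form) : form := Until ftrue a.
Definition WNext (a : form) : form := Neg (Next (Neg a)).

(* Propositional valuation treating propositions, Next- and Until-formulas
   as atoms; a formula is an instance of a propositional tautology iff it is
   true under every such valuation. *)
Fixpoint pval (v : form -> bool) (f : form) : bool :=
  match f with
  | Neg a => negb (pval v a)
  | And a b => pval v a && pval v b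
  | _ => v f
  end.

Definition taut_instance (f : form) : Prop := forall v, pval v f = true.

(* Provability in AX^gen extended with the extra axioms [ext]. *)
Inductive prov (ext : form -> Prop) : form -> Prop :=
| Ax_Prop f : taut_instance f -> prov ext f
| Ax_Ext f : ext f -> prov ext f
| R_MP a b : prov ext a -> prov ext (Imp a b) -> prov ext b
| Ax_T1 a b : prov ext (Imp (And (Next a) (Next (Imp a b))) (Next b))
| Ax_T2' a b : prov ext (Iff (Until a b) (Or b (And a (WNext (Until a b)))))
| Ax_T3' a : prov ext (Iff (Next a) (Or (Next ffalse) (WNext a)))
| R_RT1 a : prov ext a -> prov ext (Next a)
| R_RT2 a b c : prov ext (Imp c (And (Neg b) (Next c))) ->
                prov ext (Imp c (Neg (Until a b))).

Definition ext_gen : form -> Prop := fun _ => False.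
Definition ext_inf : form -> Prop := fun f => f = Neg (Next ffalse).
Definition ext_fin : form -> Prop := fun f => f = Ev (Next ffalse).

Definition consistent (ext : form -> Prop) (f : form) : Prop :=
  ~ prov ext (Neg f).

Definition conj (l : list form) : form := fold_right And ftrue l.

Inductive clp (phi : form) : form -> Prop :=
| Cl_self : clp phi phi
| Cl_fin : clp phi (Until ftrue (Next ffalse))
| Cl_neg a : clp phi (Neg a) -> clp phi a
| Cl_and1 a b : clp phi (And a b) -> clp phi a
| Cl_and2 a b : clp phi (And a b) -> clp phi b
| Cl_next a : clp phi (Next a) -> clp phi a
| Cl_nextneg a : clp phi (Next (Neg a)) -> clp phi (Next a)
| Cl_until1 a b : clp phi (Until a b) -> clp phi a
| Cl_until2 a b : clp phi (Until a b) -> clp phi b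
| Cl_until3 a b : clp phi (Until a b) -> clp phi (WNext (Until a b)).

Definition cl (phi psi : form) : Prop :=
  clp phi psi \/ exists chi, clp phi chi /\ psi = Neg chi.

(* An ax-atom of phi: a maximal ax-consistent subset of Cl(phi)
   (finite sets represented by lists, membership = In). *)
Definition atom (ext : form -> Prop) (phi : form) (V : list form) : Prop :=
  (forall psi, In psi V -> cl phi psi) /\
  consistent ext (conj V) /\
  (forall W : list form, incl V W -> (forall psi, In psi W -> cl phi psi) ->
     consistent ext (conj W) -> incl W V).

Definition arrow (ext : form -> Prop) (V W : list form) : Prop :=
  consistent ext (And (conj V) (WNext (conj W))).

Definition fchain (ext : form -> Prop) (phi : form) (c : list (list form)) : Prop :=
  (forall i, i < length c -> atom ext phi (nth i c [])) /\
  (forall i, S i < length c -> arrow ext (nth i c []) (nth (S i) c [])).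

Definition ichain (ext : form -> Prop) (phi : form) (s : nat -> list form) : Prop :=
  forall i, atom ext phi (s i) /\ arrow ext (s i) (s (S i)).

Definition facceptable (c : list (list form)) : Prop :=
  forall i a b, i < length c -> In (Until a b) (nth i c []) ->
    exists j, i <= j /\ j < length c /\ In b (nth j c []) /\
      (forall k, i <= k -> k < j -> In a (nth k c [])).

Definition iacceptable (s : nat -> list form) : Prop :=
  forall i a b, In (Until a b) (s i) ->
    exists j, i <= j /\ In b (s j) /\
      (forall k, i <= k -> k < j -> In a (s k)).

Definition fprefix (c d : list (list form)) : Prop := exists e, d = c ++ e.
Definition iprefix (c : list (list form)) (s : nat -> list form) : Prop :=
  forall i, i < length c -> s i = nth i c [].

(* The closure Cl(phi) is finite, so there are finitely many atoms and the
   disjunction of all of them is provable.  An atom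
   without [Next false] has a successor: otherwise it would prove [Next] of the
   empty disjunction, i.e. [Next false].  An eventuality [a U b] of an atom V is
   fulfilled along some chain from V: otherwise the disjunction of V and of all
   atoms reachable from V along chains avoiding b proves [~ b /\ Next] of itself,
   and RT2 refutes [a U b] in V.
   Fulfilling the pending eventualities of a finite chain one at a time, a chain
   either reaches an atom with [Next false] -- which ends it, and forces all its
   eventualities -- or can be extended forever, and the limit of the successive
   extensions is an acceptable infinite chain.  In AX^inf no atom contains
   [Next false]; in AX^fin every atom contains [true U Next false]. *)

From Stdlib Require Import List Arith Lia Bool Classical ClassicalEpsilon.
Import ListNotations.

(** * Propositional reasoning and the next-time operators *)

Definition disj (l : list form) : form := fold_right Or ffalse l.

Lemma pval_ftrue v : pval v ftrue = true.
Proof. simpl; destruct (v (Var 0)); reflexivity. Qed.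

Lemma pval_ffalse v : pval v ffalse = false.
Proof. simpl; destruct (v (Var 0)); reflexivity. Qed.

Lemma pval_Imp v a b : pval v (Imp a b) = implb (pval v a) (pval v b).
Proof. simpl; destruct (pval v a), (pval v b); reflexivity. Qed.

Lemma pval_Or v a b : pval v (Or a b) = pval v a || pval v b.
Proof. simpl; destruct (pval v a), (pval v b); reflexivity. Qed.

Lemma pval_Iff v a b : pval v (Iff a b) = Bool.eqb (pval v a) (pval v b).
Proof. unfold Iff; simpl; destruct (pval v a), (pval v b); reflexivity. Qed.

Lemma pval_WNext v a : pval v (WNext a) = negb (v (Next (Neg a))).
Proof. reflexivity. Qed.

Lemma pval_conj v l : pval v (conj l) = true <-> forall x, In x l -> pval v x = true.
Proof.
  induction l as [|y l IH]; cbn [conj fold_right In].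
  - split; [tauto | intros; apply pval_ftrue].
  - fold (conj l). cbn [pval]. rewrite andb_true_iff, IH. firstorder congruence.
Qed.

Lemma pval_disj v l : pval v (disj l) = true <-> exists x, In x l /\ pval v x = true.
Proof.
  induction l as [|y l IH]; cbn [disj fold_right In].
  - rewrite pval_ffalse. split; [discriminate | intros [x [[] _]]].
  - fold (disj l). rewrite pval_Or, orb_true_iff, IH. firstorder (subst; auto).
Qed.

Lemma prov_of_tautological_consequence ext (hs : list form) (c : form) :
  (forall h, In h hs -> prov ext h) ->
  (forall v, (forall h, In h hs -> pval v h = true) -> pval v c = true) ->
  prov ext c.
Proof.
  revert c; induction hs as [|h hs IH]; intros c Hp Hv.
  - apply Ax_Prop. intro v. apply Hv. intros h [].
  - apply R_MP with h; [apply Hp; left; reflexivity |].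
    apply IH; [intros; apply Hp; right; assumption |].
    intros v Hh. rewrite pval_Imp. destruct (pval v h) eqn:E; [| reflexivity].
    apply Hv. intros h' [<- | Hi]; auto.
Qed.

Ltac pval_simpl :=
  repeat progress (rewrite ?pval_Imp, ?pval_Or, ?pval_Iff, ?pval_WNext, ?pval_ftrue, ?pval_ffalse in *;
                   cbn [pval] in * ).

(* [taut_from hs] reduces a provability goal to a propositional one, given
   that the formulas [hs] are provable; [bool_cases] then decides it by
   brute force over the valuations of the maximal non-boolean subformulas. *)
Ltac taut_from hs :=
  apply (prov_of_tautological_consequence _ hs);
  [ let h := fresh in let Hh := fresh in
    intros h Hh; simpl in Hh;
    repeat (destruct Hh as [Hh | Hh]; [subst h; assumption |]); destruct Hh
  | let v := fresh "v" in let Hv := fresh in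
    intros v Hv; cbn [In] in Hv;
    repeat match goal with Hv : forall h, _ = h \/ _ -> _ |- _ =>
      let H := fresh in
      pose proof (Hv _ (or_introl eq_refl)) as H;
      specialize (fun h Hh => Hv h (or_intror Hh)) end;
    pval_simpl ].

Ltac bool_cases :=
  cbn [pval] in *;
  repeat match goal with
  | |- context [?f ?t] => match type of f with form -> bool => destruct (f t) end
  | H : context [?f ?t] |- _ => match type of f with form -> bool => destruct (f t) end
  end; simpl in *; congruence.

Section Provability.

Variable ext : form -> Prop.

Lemma prov_conj_mem l x : In x l -> prov ext (Imp (conj l) x).
Proof. intro Hx. taut_from (@nil form). rewrite implb_true_iff, pval_conj. auto. Qed.

Lemma prov_mem_disj l x : In x l -> prov ext (Imp x (disj l)).
Proof. intro Hx. taut_from (@nil form). rewrite implb_true_iff, pval_disj. eauto. Qed.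

Lemma prov_disj_elim (l : list (list form)) c :
  (forall U, In U l -> prov ext (Imp (conj U) c)) -> prov ext (Imp (disj (map conj l)) c).
Proof.
  induction l as [|U l IH]; intro H; cbn [map disj fold_right].
  - taut_from (@nil form). bool_cases.
  - fold (disj (map conj l)). assert (HU : prov ext (Imp (conj U) c)) by (apply H; left; reflexivity).
    assert (Hl : prov ext (Imp (disj (map conj l)) c)) by (apply IH; intros; apply H; right; assumption).
    taut_from [Imp (conj U) c; Imp (disj (map conj l)) c]. bool_cases.
Qed.

Lemma prov_Next_mono x y : prov ext (Imp x y) -> prov ext (Imp (Next x) (Next y)).
Proof.
  intro H. pose proof (R_RT1 _ _ H). pose proof (Ax_T1 ext x y).
  taut_from [Next (Imp x y); Imp (And (Next x) (Next (Imp x y))) (Next y)]. bool_cases.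
Qed.

Lemma prov_Next_and x y : prov ext (Imp (And (Next x) (Next y)) (Next (And x y))).
Proof.
  assert (H : prov ext (Imp x (Imp y (And x y)))) by (taut_from (@nil form); bool_cases).
  apply prov_Next_mono in H. pose proof (Ax_T1 ext y (And x y)).
  taut_from [Imp (Next x) (Next (Imp y (And x y)));
             Imp (And (Next y) (Next (Imp y (And x y)))) (Next (And x y))].
  bool_cases.
Qed.

Lemma prov_Next_false_WNext x : prov ext (Imp (Next ffalse) (Neg (WNext x))).
Proof.
  assert (H : prov ext (Imp ffalse (Neg x))) by (taut_from (@nil form); bool_cases).
  apply prov_Next_mono in H. taut_from [Imp (Next ffalse) (Next (Neg x))]. bool_cases.
Qed.

Lemma prov_WNext_Next x : prov ext (Imp (WNext x) (Next x)).
Proof. pose proof (Ax_T3' ext x). taut_from [Iff (Next x) (Or (Next ffalse) (WNext x))]. bool_cases. Qed.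

Lemma prov_Next_WNext x : prov ext (Imp (And (Next x) (Neg (Next ffalse))) (WNext x)).
Proof. pose proof (Ax_T3' ext x). taut_from [Iff (Next x) (Or (Next ffalse) (WNext x))]. bool_cases. Qed.

Lemma prov_WNext_mono x y : prov ext (Imp x y) -> prov ext (Imp (WNext x) (WNext y)).
Proof.
  intro H. apply prov_Next_mono in H.
  pose proof (prov_WNext_Next x). pose proof (prov_Next_false_WNext x). pose proof (prov_Next_WNext y).
  taut_from [Imp (Next x) (Next y); Imp (WNext x) (Next x); Imp (Next ffalse) (Neg (WNext x));
             Imp (And (Next y) (Neg (Next ffalse))) (WNext y)].
  bool_cases.
Qed.

Lemma prov_WNext_excl x : prov ext (Neg (And (WNext x) (WNext (Neg x)))).
Proof.
  assert (H : prov ext (Imp (And x (Neg x)) ffalse)) by (taut_from (@nil form); bool_cases).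
  apply prov_Next_mono in H.
  pose proof (prov_WNext_Next x). pose proof (prov_WNext_Next (Neg x)).
  pose proof (prov_Next_and x (Neg x)). pose proof (prov_Next_false_WNext x).
  taut_from [Imp (WNext x) (Next x); Imp (WNext (Neg x)) (Next (Neg x));
             Imp (And (Next x) (Next (Neg x))) (Next (And x (Neg x)));
             Imp (Next (And x (Neg x))) (Next ffalse); Imp (Next ffalse) (Neg (WNext x))].
  bool_cases.
Qed.

Lemma prov_Next_conseq h l z :
  (forall y, In y l -> prov ext (Imp h (Next y))) -> prov ext (Imp (conj l) z) ->
  prov ext (Imp h (Next z)).
Proof.
  intros Hl Hz. apply prov_Next_mono in Hz.
  assert (Hc : prov ext (Imp h (Next (conj l)))).
  { clear Hz. induction l as [|y l IH]; cbn [conj fold_right].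
    - assert (Ht : prov ext (Next ftrue)) by (apply R_RT1; taut_from (@nil form); bool_cases).
      taut_from [Next ftrue]. bool_cases.
    - fold (conj l). assert (Hy : prov ext (Imp h (Next y))) by (apply Hl; left; reflexivity).
      assert (Hr : prov ext (Imp h (Next (conj l)))) by (apply IH; intros; apply Hl; right; assumption).
      pose proof (prov_Next_and y (conj l)).
      taut_from [Imp h (Next y); Imp h (Next (conj l));
                 Imp (And (Next y) (Next (conj l))) (Next (And y (conj l)))].
      bool_cases. }
  taut_from [Imp h (Next (conj l)); Imp (Next (conj l)) (Next z)]. bool_cases.
Qed.

End Provability.

Lemma clp_Next_false phi : clp phi (Next ffalse).
Proof. exact (Cl_until2 _ _ _ (Cl_fin phi)). Qed.

Section Atoms.

Variables (ext : form -> Prop) (phi : form).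

Lemma atom_not_prov_neg V : atom ext phi V -> ~ prov ext (Neg (conj V)).
Proof. intros [_ [Hc _]]. exact Hc. Qed.

Lemma atom_refutes_nonmem V x : atom ext phi V -> cl phi x -> ~ In x V ->
  prov ext (Imp (conj V) (Neg x)).
Proof.
  intros [Hcl [Hc Hmax]] Hx Hn.
  destruct (classic (consistent ext (conj (x :: V)))) as [C | C].
  - exfalso. apply Hn, (Hmax (x :: V)); [intros y Hy; right; exact Hy | | exact C | left; reflexivity].
    intros y [<- | Hy]; auto.
  - apply NNPP in C. cbn [conj fold_right] in C; fold (conj V) in C.
    taut_from [Neg (And x (conj V))]. bool_cases.
Qed.

Lemma atom_mem_of_prov V x : atom ext phi V -> cl phi x -> prov ext (Imp (conj V) x) -> In x V.
Proof.
  intros HV Hx Hp. apply NNPP; intro Hn.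
  pose proof (atom_refutes_nonmem V x HV Hx Hn). apply (atom_not_prov_neg V HV).
  taut_from [Imp (conj V) x; Imp (conj V) (Neg x)]. bool_cases.
Qed.

Lemma atom_not_mem_of_refuted V x : atom ext phi V -> prov ext (Imp (conj V) (Neg x)) -> ~ In x V.
Proof.
  intros HV Hp Hx. pose proof (prov_conj_mem ext V x Hx). apply (atom_not_prov_neg V HV).
  taut_from [Imp (conj V) x; Imp (conj V) (Neg x)]. bool_cases.
Qed.

Lemma atom_mem_or_neg V x : atom ext phi V -> clp phi x -> In x V \/ In (Neg x) V.
Proof.
  intros HV Hx. destruct (classic (In x V)) as [H | H]; [left; exact H | right].
  apply (atom_mem_of_prov V _ HV); [right; exists x; auto |].
  exact (atom_refutes_nonmem V x HV (or_introl Hx) H).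
Qed.

Lemma atom_until_clp V a b : atom ext phi V -> In (Until a b) V -> clp phi (Until a b).
Proof. intros [Hcl _] H. destruct (Hcl _ H) as [H' | [c [_ E]]]; [exact H' | discriminate]. Qed.

Lemma atom_until_unfold V a b : atom ext phi V -> In (Until a b) V -> ~ In b V ->
  In a V /\ prov ext (Imp (conj V) (WNext (Until a b))).
Proof.
  intros HV Hu Hb. pose proof (atom_until_clp V a b HV Hu) as Hc.
  destruct (atom_mem_or_neg V b HV (Cl_until2 _ _ _ Hc)) as [Hb' | Hnb]; [contradiction |].
  pose proof (prov_conj_mem ext V _ Hu). pose proof (prov_conj_mem ext V _ Hnb).
  pose proof (Ax_T2' ext a b).
  assert (Hunf : prov ext (Imp (conj V) (And a (WNext (Until a b))))).
  { taut_from [Imp (conj V) (Until a b); Imp (conj V) (Neg b);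
               Iff (Until a b) (Or b (And a (WNext (Until a b))))]. bool_cases. }
  split.
  - apply (atom_mem_of_prov V _ HV); [left; exact (Cl_until1 _ _ _ Hc) |].
    taut_from [Imp (conj V) (And a (WNext (Until a b)))]. bool_cases.
  - taut_from [Imp (conj V) (And a (WNext (Until a b)))]. bool_cases.
Qed.

Lemma atom_until_Next_false V a b : atom ext phi V -> In (Until a b) V -> In (Next ffalse) V -> In b V.
Proof.
  intros HV Hu Hf. apply NNPP; intro Hb.
  destruct (atom_until_unfold V a b HV Hu Hb) as [_ H].
  pose proof (prov_conj_mem ext V _ Hf). pose proof (prov_Next_false_WNext ext (Until a b)).
  apply (atom_not_prov_neg V HV).
  taut_from [Imp (conj V) (WNext (Until a b)); Imp (conj V) (Next ffalse);
             Imp (Next ffalse) (Neg (WNext (Until a b)))]. bool_cases.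
Qed.

Lemma arrow_Next_false V W : In (Next ffalse) V -> ~ arrow ext V W.
Proof.
  intros Hf Ha. apply Ha.
  pose proof (prov_conj_mem ext V _ Hf). pose proof (prov_Next_false_WNext ext (conj W)).
  taut_from [Imp (conj V) (Next ffalse); Imp (Next ffalse) (Neg (WNext (conj W)))]. bool_cases.
Qed.

Lemma arrow_WNext_mem V W x : arrow ext V W -> atom ext phi W -> cl phi x ->
  prov ext (Imp (conj V) (WNext x)) -> In x W.
Proof.
  intros Ha HW Hx Hp. apply NNPP; intro Hn.
  pose proof (prov_WNext_mono ext _ _ (atom_refutes_nonmem W x HW Hx Hn)).
  pose proof (prov_WNext_excl ext x).
  apply Ha. taut_from [Imp (conj V) (WNext x); Imp (WNext (conj W)) (WNext (Neg x));
                       Neg (And (WNext x) (WNext (Neg x)))]. bool_cases.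
Qed.

End Atoms.

(** * Finiteness of the closure *)

Lemma exists_filter {X} (P : X -> Prop) (l : list X) :
  exists l', forall x, In x l' <-> In x l /\ P x.
Proof.
  induction l as [|a l [l' IH]].
  - exists []; simpl; tauto.
  - destruct (classic (P a)).
    + exists (a :: l'); intro x; simpl; rewrite IH; split; [intros [<- | ?]; tauto |].
      intros [[<- | ?] ?]; auto.
    + exists l'; intro x; simpl; rewrite IH; split; [tauto |].
      intros [[<- | ?] ?]; auto; contradiction.
Qed.

Fixpoint strip_negs (a : form) : list form :=
  a :: match a with Neg a' => strip_negs a' | _ => [] end.

(* The entries [Next (Neg .. (Neg b))] account for the rule taking [Next (Neg a)]
   to [Next a]. *)
Fixpoint closure_list (f : form) : list form :=
  match f with
  | Var _ => [f]
  | Neg a => f :: closure_list a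
  | And a b => f :: closure_list a ++ closure_list b
  | Next a => map Next (strip_negs a) ++ closure_list a
  | Until a b =>
      f :: WNext f :: Next (Neg f) :: Neg f :: Next f :: closure_list a ++ closure_list b
  end.

Inductive closure_step : form -> form -> Prop :=
| cs_neg a : closure_step (Neg a) a
| cs_and1 a b : closure_step (And a b) a
| cs_and2 a b : closure_step (And a b) b
| cs_next a : closure_step (Next a) a
| cs_nextneg a : closure_step (Next (Neg a)) (Next a)
| cs_until1 a b : closure_step (Until a b) a
| cs_until2 a b : closure_step (Until a b) b
| cs_until3 a b : closure_step (Until a b) (WNext (Until a b)).

Lemma closure_list_self f : In f (closure_list f).
Proof. destruct f; simpl; auto. apply in_or_app; left. destruct f; simpl; auto. Qed.

Lemma strip_negs_closure_list a x : In x (strip_negs a) -> In x (closure_list a).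
Proof.
  induction a; intro H; simpl in H; destruct H as [<- | H];
    try apply closure_list_self; try contradiction.
  simpl; auto.
Qed.

Lemma strip_negs_neg a x : In (Neg x) (strip_negs a) -> In x (strip_negs a).
Proof.
  induction a; simpl; intros H; destruct H as [H | H]; try discriminate; try contradiction.
  - injection H as ->. right. destruct x; simpl; auto.
  - auto.
Qed.

Lemma closure_list_closed f y z : In y (closure_list f) -> closure_step y z -> In z (closure_list f).
Proof.
  induction f; intros Hy Hs; simpl in *.
  - destruct Hy as [<- | []]; inversion Hs.
  - destruct Hy as [<- | Hy].
    + inversion Hs; subst; right; apply closure_list_self.
    + right; eauto.
  - destruct Hy as [<- | Hy].
    + inversion Hs; subst; right; apply in_or_app; [left | right]; apply closure_list_self.
    + apply in_app_or in Hy; right; apply in_or_app; destruct Hy; [left | right]; eauto.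
  - apply in_app_or in Hy; destruct Hy as [Hy | Hy].
    + apply in_map_iff in Hy as [x [<- Hx]]. inversion Hs; subst.
      * apply in_or_app; right. apply strip_negs_closure_list; auto.
      * apply in_or_app; left. apply in_map. apply strip_negs_neg; auto.
    + apply in_or_app; right; eauto.
  - destruct Hy as [<- | [<- | [<- | [<- | [<- | Hy]]]]];
      try (inversion Hs; subst; simpl; auto 10 using in_or_app, closure_list_self; fail).
    apply in_app_or in Hy; do 5 right; apply in_or_app; destruct Hy; [left | right]; eauto.
Qed.

Lemma clp_enum phi : exists L, forall x, In x L <-> clp phi x.
Proof.
  set (L := closure_list phi ++ closure_list (Until ftrue (Next ffalse))).
  assert (HL : forall x, clp phi x -> In x L).
  { assert (C : forall y z, In y L -> closure_step y z -> In z L).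
    { intros y z H Hs. apply in_app_or in H; apply in_or_app; destruct H; [left | right];
        eapply closure_list_closed; eauto. }
    induction 1; try (eapply C; [eassumption | constructor]).
    - apply in_or_app; left; apply closure_list_self.
    - apply in_or_app; right; apply closure_list_self. }
  destruct (exists_filter (clp phi) L) as [L' H].
  exists L'. intro x; rewrite H; firstorder.
Qed.

Fixpoint sign_choices (L : list form) : list (list form) :=
  match L with
  | [] => [[]]
  | x :: l => map (cons x) (sign_choices l) ++ map (cons (Neg x)) (sign_choices l)
  end.

Lemma prov_disj_sign_choices ext L : prov ext (disj (map conj (sign_choices L))).
Proof.
  apply Ax_Prop. intro v. apply pval_disj.
  induction L as [|x l [s [Hs Hv]]]; simpl.
  - exists (conj []). split; auto. apply pval_ftrue.
  - apply in_map_iff in Hs as [sg [<- Hsg]].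
    destruct (pval v x) eqn:E; [exists (conj (x :: sg)) | exists (conj (Neg x :: sg))];
      (split; [apply in_map, in_or_app | cbn [conj fold_right pval]; rewrite ?E; exact Hv]).
    + left; apply in_map; exact Hsg.
    + right; apply in_map; exact Hsg.
Qed.

Lemma sign_choices_spec L s : In s (sign_choices L) ->
  (forall x, In x L -> In x s \/ In (Neg x) s) /\
  (forall y, In y s -> exists x, In x L /\ (y = x \/ y = Neg x)).
Proof.
  revert s; induction L as [|x l IH]; intros s Hs; simpl in *.
  - destruct Hs as [<- | []]. simpl; split; tauto.
  - apply in_app_or in Hs; destruct Hs as [Hs | Hs]; apply in_map_iff in Hs as [sg [<- Hsg]];
      destruct (IH _ Hsg) as [H1 H2]; split.
    all: first [ intros y [<- | Hy]; simpl; auto; destruct (H1 _ Hy); auto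
               | intros y [<- | Hy]; eauto; destruct (H2 _ Hy) as [z [? ?]]; eauto ].
Qed.

(* The consistent sign choices over [Cl'(phi)] are atoms, and their disjunction is provable. *)
Lemma atoms_cover ext phi :
  exists A, (forall U, In U A -> atom ext phi U) /\ prov ext (disj (map conj A)).
Proof.
  destruct (clp_enum phi) as [L HL].
  destruct (exists_filter (fun s => consistent ext (conj s)) (sign_choices L)) as [A HA].
  exists A. split.
  - intros U HU. apply HA in HU as [Hs Hc]. destruct (sign_choices_spec _ _ Hs) as [H1 H2].
    split; [| split; [exact Hc |]].
    + intros y Hy. destruct (H2 _ Hy) as [x [Hx [-> | ->]]]; apply HL in Hx; [left | right]; eauto.
    + intros W HUW HWcl HWc y Hy. apply NNPP; intro Hn.
      assert (Hb : forall z, In z W -> ~ In (Neg z) W).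
      { intros z Hz Hnz. apply HWc.
        pose proof (prov_conj_mem ext W _ Hz). pose proof (prov_conj_mem ext W _ Hnz).
        taut_from [Imp (conj W) z; Imp (conj W) (Neg z)]. bool_cases. }
      destruct (HWcl _ Hy) as [Hc' | [c [Hc' ->]]]; apply HL in Hc'; destruct (H1 _ Hc') as [Hu | Hu].
      * contradiction.
      * exact (Hb y Hy (HUW _ Hu)).
      * exact (Hb c (HUW _ Hu) Hy).
      * contradiction.
  - assert (H : prov ext (Imp (disj (map conj (sign_choices L))) (disj (map conj A)))).
    { apply prov_disj_elim. intros s Hs.
      destruct (classic (consistent ext (conj s))) as [Hc | Hc].
      + apply prov_mem_disj, in_map, HA; auto.
      + apply NNPP in Hc. taut_from [Neg (conj s)]. bool_cases. }
    pose proof (prov_disj_sign_choices ext L).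
    taut_from [disj (map conj (sign_choices L)); Imp (disj (map conj (sign_choices L))) (disj (map conj A))].
    bool_cases.
Qed.

Definition fulfilled (d : list (list form)) i a b : Prop :=
  exists j, i <= j /\ j < length d /\ In b (nth j d []) /\
    (forall k, i <= k -> k < j -> In a (nth k d [])).

Lemma fulfilled_app d q i a b : fulfilled d i a b -> fulfilled (d ++ q) i a b.
Proof.
  intros [j [H1 [H2 [H3 H4]]]]. exists j. rewrite length_app.
  repeat split; try lia; rewrite ?app_nth1 by lia; auto.
  intros k Hk1 Hk2. rewrite app_nth1 by lia. auto.
Qed.

Lemma fulfilled_app_r d e i a b : fulfilled e i a b -> fulfilled (d ++ e) (length d + i) a b.
Proof.
  intros [j [H1 [H2 [H3 H4]]]]. exists (length d + j). rewrite length_app.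
  repeat split; try lia; rewrite ?app_nth2 by lia; replace (length d + j - length d) with j by lia; auto.
  intros k Hk1 Hk2. rewrite app_nth2 by lia. apply H4; lia.
Qed.

Lemma fulfilled_earlier d i j a b : fulfilled d j a b -> i <= j ->
  (forall k, i <= k -> k < j -> In a (nth k d [])) -> fulfilled d i a b.
Proof.
  intros [l [H1 [H2 [H3 H4]]]] Hij Ha. exists l. repeat split; auto; try lia.
  intros k Hk1 Hk2. destruct (Nat.lt_ge_cases k j); auto.
Qed.

Section Chains.

Variables (ext : form -> Prop) (phi : form).

Lemma fchain_atom d i : fchain ext phi d -> i < length d -> atom ext phi (nth i d []).
Proof. intros [H _]; auto. Qed.

Lemma fchain_singleton U : atom ext phi U -> fchain ext phi [U].
Proof. intro H. split; simpl; intros [|i] Hi; simpl in *; auto; lia. Qed.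

Lemma fchain_cons2 U W l :
  fchain ext phi (U :: W :: l) <-> atom ext phi U /\ arrow ext U W /\ fchain ext phi (W :: l).
Proof.
  split.
  - intros [Ha Hr]. split; [apply (Ha 0); simpl; lia |]. split; [apply (Hr 0); simpl; lia |].
    split; intros i Hi; [apply (Ha (S i)) | apply (Hr (S i))]; simpl in *; lia.
  - intros [HU [HUW [Ha Hr]]].
    split; intros [|i] Hi; simpl in *; auto; [apply Ha | apply Hr]; simpl; lia.
Qed.

Lemma fchain_app_cons d x q :
  fchain ext phi (d ++ [x]) -> fchain ext phi (x :: q) -> fchain ext phi (d ++ x :: q).
Proof.
  intros Hd Hq. induction d as [|y d IH]; [exact Hq |].
  destruct d as [|z d]; simpl in *; apply fchain_cons2; apply fchain_cons2 in Hd; intuition.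
Qed.

Lemma fchain_last_atom e y : fchain ext phi (e ++ [y]) -> atom ext phi y.
Proof.
  intro H. rewrite <- (nth_middle e [] y []).
  apply fchain_atom; [exact H | rewrite length_app; simpl; lia].
Qed.

Lemma fchain_until_unfulfilled d i a b : fchain ext phi d -> i < length d ->
  In (Until a b) (nth i d []) -> ~ fulfilled d i a b ->
  forall k, i <= k -> k < length d ->
    In (Until a b) (nth k d []) /\ In a (nth k d []) /\ ~ In b (nth k d []).
Proof.
  intros Hd Hi Hu NF.
  assert (Hcu : clp phi (Until a b)) by exact (atom_until_clp ext phi _ a b (fchain_atom d i Hd Hi) Hu).
  assert (Hupto : forall m, i + m < length d -> forall k, i <= k <= i + m ->
    In (Until a b) (nth k d []) /\ In a (nth k d []) /\ ~ In b (nth k d [])).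
  { induction m as [|m IH]; intros Hm k Hk.
    - replace k with i by lia.
      assert (Hb : ~ In b (nth i d [])) by (intro Hb; apply NF; exists i; repeat split; auto; lia).
      destruct (atom_until_unfold ext phi _ a b (fchain_atom d i Hd Hi) Hu Hb). auto.
    - destruct (Nat.le_gt_cases k (i + m)); [apply IH; lia |].
      replace k with (S (i + m)) by lia.
      destruct (IH ltac:(lia) (i + m) ltac:(lia)) as [Hu' [_ Hb']].
      destruct (atom_until_unfold ext phi _ a b (fchain_atom d (i + m) Hd ltac:(lia)) Hu' Hb') as [_ HW].
      assert (HU : In (Until a b) (nth (S (i + m)) d [])).
      { apply (arrow_WNext_mem ext phi (nth (i + m) d [])); auto.
        - apply (proj2 Hd); lia.
        - apply fchain_atom; auto; lia.
        - left; exact Hcu. }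
      assert (Hb : ~ In b (nth (S (i + m)) d [])).
      { intro Hb. apply NF. exists (S (i + m)). repeat split; auto; try lia.
        intros k' Hk1 Hk2. apply IH; lia. }
      destruct (atom_until_unfold ext phi _ a b (fchain_atom d (S (i + m)) Hd ltac:(lia)) HU Hb). auto. }
  intros k Hk1 Hk2. apply (Hupto (k - i)); lia.
Qed.

(* [Next false] can only occur in the last atom of a chain, where it forces all
   pending eventualities. *)
Lemma fchain_Next_false_acceptable d i : fchain ext phi d -> i < length d ->
  In (Next ffalse) (nth i d []) -> facceptable d.
Proof.
  intros Hd Hi Hf j a b Hj Hu.
  assert (Hlast : length d = S i).
  { destruct (Nat.lt_ge_cases (S i) (length d)) as [H | H]; [| lia].
    exfalso. exact (arrow_Next_false ext _ _ Hf (proj2 Hd i H)). }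
  apply NNPP; intro NF.
  destruct (fchain_until_unfulfilled d j a b Hd Hj Hu NF i ltac:(lia) Hi) as [Hu' [_ Hb]].
  exact (Hb (atom_until_Next_false ext phi _ a b (fchain_atom d i Hd Hi) Hu' Hf)).
Qed.

End Chains.

Lemma iterate_choice {X} (P : X -> Prop) (R : X -> X -> Prop) x0 :
  P x0 -> (forall x, P x -> exists y, P y /\ R x y) ->
  exists f : nat -> X, f 0 = x0 /\ forall n, P (f n) /\ R (f n) (f (S n)).
Proof.
  intros H0 Hstep.
  assert (Hs : forall x, exists y, P x -> P y /\ R x y).
  { intro x. destruct (classic (P x)) as [Hx | Hx].
    - destruct (Hstep x Hx) as [y Hy]. exists y; auto.
    - exists x; tauto. }
  set (g x := proj1_sig (constructive_indefinite_description _ (Hs x))).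
  assert (Hg : forall x, P x -> P (g x) /\ R x (g x))
    by (intro x; unfold g; destruct constructive_indefinite_description; auto).
  exists (fun n => Nat.iter n g x0). split; [reflexivity |].
  assert (HP : forall n, P (Nat.iter n g x0)) by (induction n; [exact H0 | apply Hg; exact IHn]).
  intro n. split; [apply HP | apply Hg, HP].
Qed.

Lemma fprefix_trans c d e : fprefix c d -> fprefix d e -> fprefix c e.
Proof. intros [x ->] [y ->]. exists (x ++ y). symmetry; apply app_assoc. Qed.

Lemma fprefix_nth d e i : fprefix d e -> i < length d -> nth i e [] = nth i d [].
Proof. intros [x ->] Hi. apply app_nth1; auto. Qed.

Lemma fprefix_limit (D : nat -> list (list form)) :
  (forall m, fprefix (D m) (D (S m))) -> (forall m, m < length (D m)) ->
  forall m i, i < length (D m) -> nth i (D (S i)) [] = nth i (D m) [].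
Proof.
  intros Hpre Hlen.
  assert (Hk : forall m k, fprefix (D m) (D (k + m))).
  { intros m k; induction k as [|k IH]; [exists []; rewrite app_nil_r; reflexivity |].
    exact (fprefix_trans _ _ _ IH (Hpre (k + m))). }
  intros m i Hi. destruct (Nat.le_gt_cases m (S i)).
  - replace (S i) with ((S i - m) + m) by lia. apply fprefix_nth; auto.
  - replace m with ((m - S i) + S i) by lia. symmetry. apply fprefix_nth; [apply Hk | specialize (Hlen (S i)); lia].
Qed.

(** * Extending chains *)

Section Extension.

Variables (ext : form -> Prop) (phi : form) (A : list (list form)).
Hypothesis A_atoms : forall U, In U A -> atom ext phi U.
Hypothesis A_cover : prov ext (disj (map conj A)).

(* [Next] of the disjunction of all atoms is provable, and [W] refutes [Next] of
   each atom that is not its successor. *)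
Lemma prov_Next_successors W x S :
  (forall U, In U A -> arrow ext W U -> In U S \/ prov ext (Imp (conj U) (Neg x))) ->
  prov ext (Imp (conj W) (Next x)) -> prov ext (Imp (conj W) (Next (disj (map conj S)))).
Proof.
  intros HS Hx. destruct (exists_filter (fun U => ~ arrow ext W U) A) as [B HB].
  set (notB := map (fun U => Neg (conj U)) B).
  apply (prov_Next_conseq ext _ [disj (map conj A); conj notB; x]).
  - intros y [<- | [<- | [<- | []]]].
    + pose proof (R_RT1 _ _ A_cover). taut_from [Next (disj (map conj A))]. bool_cases.
    + apply (prov_Next_conseq ext _ notB); [| taut_from (@nil form); bool_cases].
      intros y Hy. unfold notB in Hy. apply in_map_iff in Hy as [U [<- HU]].
      apply HB in HU as [_ HU]. apply NNPP in HU.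
      taut_from [Neg (And (conj W) (WNext (conj U)))]. bool_cases.
    + exact Hx.
  - assert (H : prov ext (Imp (disj (map conj A)) (Imp (conj notB) (Imp x (disj (map conj S)))))).
    { apply prov_disj_elim. intros U HU. destruct (classic (arrow ext W U)) as [Ha | Ha].
      - destruct (HS U HU Ha) as [HUS | HUx].
        + pose proof (prov_mem_disj ext _ _ (in_map conj _ _ HUS)).
          taut_from [Imp (conj U) (disj (map conj S))]. bool_cases.
        + taut_from [Imp (conj U) (Neg x)]. bool_cases.
      - assert (HnU : In (Neg (conj U)) notB) by (apply (in_map (fun U => Neg (conj U))), HB; auto).
        pose proof (prov_conj_mem ext _ _ HnU).
        taut_from [Imp (conj notB) (Neg (conj U))]. bool_cases. }
    cbn [conj fold_right]. taut_from [Imp (disj (map conj A)) (Imp (conj notB) (Imp x (disj (map conj S))))].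
    bool_cases.
Qed.

Lemma atom_has_successor V : atom ext phi V -> ~ In (Next ffalse) V ->
  exists U, In U A /\ arrow ext V U.
Proof.
  intros HV Hn. apply NNPP; intro Hno.
  destruct (atom_mem_or_neg ext phi V _ HV (clp_Next_false phi)) as [? | Hnf]; [contradiction |].
  assert (Hf : prov ext (Imp (conj V) (Next (disj (map conj []))))).
  { apply (prov_Next_successors V ftrue); [intros U HU Ha; exfalso; eauto |].
    assert (Ht : prov ext (Next ftrue)) by (apply R_RT1; taut_from (@nil form); bool_cases).
    taut_from [Next ftrue]. bool_cases. }
  pose proof (prov_conj_mem ext V _ Hnf). apply (atom_not_prov_neg ext phi V HV).
  taut_from [Imp (conj V) (Next ffalse); Imp (conj V) (Neg (Next ffalse))]. bool_cases.
Qed.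

Lemma atom_until_step W a b S : atom ext phi W -> In (Until a b) W -> ~ In b W ->
  (forall U, In U A -> arrow ext W U -> In (Until a b) U -> In U S) ->
  prov ext (Imp (conj W) (And (Neg b) (Next (disj (map conj S))))).
Proof.
  intros HW Hu Hb HS. pose proof (atom_until_clp ext phi W a b HW Hu) as Hc.
  destruct (atom_until_unfold ext phi W a b HW Hu Hb) as [_ HWn].
  destruct (atom_mem_or_neg ext phi W b HW (Cl_until2 _ _ _ Hc)) as [? | Hnb]; [contradiction |].
  assert (HWS : prov ext (Imp (conj W) (Next (disj (map conj S))))).
  { apply (prov_Next_successors W (Until a b)).
    - intros U HU Ha.
      destruct (atom_mem_or_neg ext phi U (Until a b) (A_atoms U HU) Hc) as [HuU | HnU].
      + left; auto.
      + right. apply prov_conj_mem; exact HnU.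
    - pose proof (prov_WNext_Next ext (Until a b)).
      taut_from [Imp (conj W) (WNext (Until a b)); Imp (WNext (Until a b)) (Next (Until a b))].
      bool_cases. }
  pose proof (prov_conj_mem ext W _ Hnb).
  taut_from [Imp (conj W) (Next (disj (map conj S))); Imp (conj W) (Neg b)]. bool_cases.
Qed.

Lemma atom_until_fulfillable V a b : atom ext phi V -> In (Until a b) V ->
  exists p, fchain ext phi (V :: p) /\ fulfilled (V :: p) 0 a b.
Proof.
  intros HV Hu. apply NNPP; intro NF.
  set (reach W := W = V \/ exists p, fchain ext phi (V :: p ++ [W])).
  assert (Hreach : forall W, reach W -> atom ext phi W /\ In (Until a b) W /\ ~ In b W).
  { intros W [-> | [p Hp]].
    { split; [exact HV | split; [exact Hu |]]. intro Hb. apply NF. exists [].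
      split; [apply fchain_singleton; exact HV | exists 0; repeat split; auto; intros; lia]. }
    assert (Hi : S (length p) < length (V :: p ++ [W])) by (simpl; rewrite length_app; simpl; lia).
    assert (NFp : ~ fulfilled (V :: p ++ [W]) 0 a b) by (intro F; apply NF; exists (p ++ [W]); auto).
    pose proof (fchain_atom ext phi _ _ Hp Hi) as HW.
    destruct (fchain_until_unfulfilled ext phi _ 0 a b Hp ltac:(simpl; lia) Hu NFp
                (S (length p)) ltac:(lia) Hi) as [H1 [_ H2]].
    simpl nth in HW, H1, H2. rewrite nth_middle in HW, H1, H2. auto. }
  destruct (exists_filter reach A) as [S HS].
  set (inv := Or (conj V) (disj (map conj S))).
  assert (Hstep : forall W, reach W -> prov ext (Imp (conj W) (And (Neg b) (Next inv)))).
  { intros W HW. destruct (Hreach W HW) as [HWa [HWu HWb]].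
    assert (HWS : prov ext (Imp (conj W) (And (Neg b) (Next (disj (map conj S)))))).
    { apply (atom_until_step W a b S HWa HWu HWb). intros U HU Ha HuU. apply HS.
      split; [exact HU | right].
      destruct HW as [-> | [p Hp]]; [exists []; apply fchain_cons2; auto using fchain_singleton |].
      exists (p ++ [W]). rewrite <- app_assoc. apply (fchain_app_cons ext phi (V :: p)); [exact Hp |].
      apply fchain_cons2; auto using fchain_singleton. }
    assert (HSinv : prov ext (Imp (Next (disj (map conj S))) (Next inv)))
      by (apply prov_Next_mono; unfold inv; taut_from (@nil form); bool_cases).
    taut_from [Imp (conj W) (And (Neg b) (Next (disj (map conj S))));
               Imp (Next (disj (map conj S))) (Next inv)].
    bool_cases. }
  assert (Hinv : prov ext (Imp inv (And (Neg b) (Next inv)))).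
  { pose proof (Hstep V (or_introl eq_refl)).
    assert (prov ext (Imp (disj (map conj S)) (And (Neg b) (Next inv))))
      by (apply prov_disj_elim; intros U HU; apply Hstep, HS; exact HU).
    unfold inv at 1.
    taut_from [Imp (conj V) (And (Neg b) (Next inv)); Imp (disj (map conj S)) (And (Neg b) (Next inv))].
    bool_cases. }
  apply (R_RT2 _ a) in Hinv. pose proof (prov_conj_mem ext V _ Hu).
  apply (atom_not_prov_neg ext phi V HV). unfold inv in Hinv.
  taut_from [Imp (Or (conj V) (disj (map conj S))) (Neg (Until a b)); Imp (conj V) (Until a b)].
  bool_cases.
Qed.

Lemma fchain_fulfil_until d a b : fchain ext phi d -> d <> [] ->
  exists q, fchain ext phi (d ++ q) /\
    forall i, i < length d -> In (Until a b) (nth i d []) -> fulfilled (d ++ q) i a b.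
Proof.
  intros Hd Hne. destruct (exists_last Hne) as [e [x ->]].
  assert (Hx_nth : nth (length e) (e ++ [x]) [] = x) by apply nth_middle.
  assert (Hlen : length (e ++ [x]) = S (length e)) by (rewrite length_app; simpl; lia).
  destruct (classic (In (Until a b) x)) as [Hx | Hx].
  - destruct (atom_until_fulfillable x a b (fchain_last_atom ext phi e x Hd) Hx) as [p [Hp Hf]].
    exists p. rewrite <- app_assoc. split; [apply fchain_app_cons; auto |].
    intros i Hi Hu. destruct (classic (fulfilled (e ++ [x]) i a b)) as [F | NF].
    + rewrite app_assoc. apply fulfilled_app; exact F.
    + apply (fulfilled_earlier _ i (length e)); [| lia |].
      * rewrite <- (Nat.add_0_r (length e)). apply fulfilled_app_r; exact Hf.
      * intros k Hk1 Hk2.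
        destruct (fchain_until_unfulfilled ext phi _ i a b Hd Hi Hu NF k Hk1 ltac:(lia)) as [_ [Ha _]].
        rewrite app_nth1 in * by lia. exact Ha.
  - exists []. rewrite app_nil_r. split; [exact Hd |].
    intros i Hi Hu. apply NNPP; intro NF. apply Hx. rewrite <- Hx_nth.
    apply (fchain_until_unfulfilled ext phi _ i a b Hd Hi Hu NF); lia.
Qed.

Lemma fchain_fulfil_pending d : fchain ext phi d -> d <> [] ->
  exists q, fchain ext phi (d ++ q) /\
    forall i a b, i < length d -> In (Until a b) (nth i d []) -> fulfilled (d ++ q) i a b.
Proof.
  intros Hd Hne.
  enough (H : forall l, exists q, fchain ext phi (d ++ q) /\ forall i a b, i < length d ->
            In (Until a b) (nth i d []) -> In (Until a b) l -> fulfilled (d ++ q) i a b).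
  { destruct (H (concat d)) as [q [Hq Hf]]. exists q. split; [exact Hq |].
    intros i a b Hi Hu. apply Hf; auto. apply in_concat. exists (nth i d []). auto using nth_In. }
  induction l as [|x l [q1 [Hq1 Hf1]]].
  - exists []. rewrite app_nil_r. split; [exact Hd | intros ? ? ? ? ? []].
  - assert (Hne1 : d ++ q1 <> []) by (destruct d; [congruence | discriminate]).
    destruct x as [| | | | a0 b0];
      try (exists q1; split; [exact Hq1 | intros i a b Hi Hu [Heq | Hl]; [discriminate | auto]]).
    destruct (fchain_fulfil_until (d ++ q1) a0 b0 Hq1 Hne1) as [q2 [Hq2 Hf2]].
    exists (q1 ++ q2). rewrite app_assoc. split; [exact Hq2 |].
    intros i a b Hi Hu [Heq | Hl].
    + injection Heq as -> ->. apply Hf2; [rewrite length_app; lia | rewrite app_nth1; auto].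
    + apply fulfilled_app; auto.
Qed.

Lemma fchain_grow d : fchain ext phi d -> d <> [] ->
  (forall e y, fchain ext phi e -> fprefix d e -> In y e -> ~ In (Next ffalse) y) ->
  exists e, fchain ext phi e /\ fprefix d e /\ length d < length e /\
    forall i a b, i < length d -> In (Until a b) (nth i d []) -> fulfilled e i a b.
Proof.
  intros Hd Hdn Hno.
  destruct (fchain_fulfil_pending d Hd Hdn) as [q [Hq Hf]].
  assert (Hqn : d ++ q <> []) by (destruct d; [congruence | discriminate]).
  destruct (exists_last Hqn) as [e [y Hey]]. rewrite Hey in Hq.
  destruct (atom_has_successor y (fchain_last_atom ext phi e y Hq)) as [U [HU HyU]].
  { apply (Hno (d ++ q)); [rewrite Hey; exact Hq | exists q; reflexivity |].
    rewrite Hey. apply in_or_app; right; left; reflexivity. }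
  exists ((d ++ q) ++ [U]). split; [| split; [| split]].
  - rewrite Hey, <- app_assoc. apply fchain_app_cons; [exact Hq |].
    apply fchain_cons2. split; [exact (fchain_last_atom ext phi e y Hq) |].
    split; [exact HyU | apply fchain_singleton, A_atoms, HU].
  - exists (q ++ [U]). symmetry. apply app_assoc.
  - rewrite !length_app. simpl. lia.
  - intros i a b Hi Hu. apply fulfilled_app. auto.
Qed.

Lemma fchain_extend_infinite c : fchain ext phi c -> c <> [] ->
  (forall d y, fchain ext phi d -> fprefix c d -> In y d -> ~ In (Next ffalse) y) ->
  exists s, ichain ext phi s /\ iacceptable s /\ iprefix c s.
Proof.
  intros Hc Hcn Hno.
  set (Inv d := fchain ext phi d /\ fprefix c d /\ d <> []).
  set (Grow d e := fprefix d e /\ length d < length e /\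
    forall i a b, i < length d -> In (Until a b) (nth i d []) -> fulfilled e i a b).
  destruct (iterate_choice Inv Grow c) as [D [HD0 HD]].
  { split; [exact Hc | split; [exists []; rewrite app_nil_r; reflexivity | exact Hcn]]. }
  { intros d [Hd [Hcd Hdn]].
    destruct (fchain_grow d Hd Hdn) as [e [He [Hde Hgrow]]].
    { intros e y He Hde. apply Hno; [exact He | exact (fprefix_trans _ _ _ Hcd Hde)]. }
    exists e. split; [split; [exact He | split] | exact (Logic.conj Hde Hgrow)].
    - exact (fprefix_trans _ _ _ Hcd Hde).
    - destruct e; [simpl in Hgrow; lia | discriminate]. }
  assert (Hlen : forall m, m < length (D m)).
  { induction m as [|m IH]; [rewrite HD0; destruct c; [congruence | simpl; lia] |].
    destruct (HD m) as [_ [_ [H _]]]. lia. }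
  assert (Hlen1 : forall m i, i < m -> i < length (D m)) by (intros m i Hi; specialize (Hlen m); lia).
  assert (Hlim := fprefix_limit D (fun m => proj1 (proj2 (HD m))) Hlen).
  exists (fun i => nth i (D (S i)) []). split; [| split].
  - intro i. cbv beta. destruct (HD (S i)) as [[HDc _] _]. destruct (HD (S (S i))) as [[HDc' _] _].
    split; [apply fchain_atom; [exact HDc | apply Hlen1; lia] |].
    rewrite (Hlim (S (S i)) i) by (apply Hlen1; lia).
    apply (proj2 HDc'). apply Hlen1; lia.
  - intros i a b Hu. cbv beta in *. destruct (HD (S i)) as [_ [_ [_ Hf]]].
    destruct (Hf i a b (Hlen1 _ _ (Nat.lt_succ_diag_r i)) Hu) as [j [Hij [Hj [Hb Ha]]]].
    exists j. split; [exact Hij | split].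
    + rewrite (Hlim _ _ Hj). exact Hb.
    + intros k Hk1 Hk2. rewrite (Hlim (S (S i))) by lia. auto.
  - intros i Hi. cbv beta. rewrite (Hlim 0), HD0 by (rewrite HD0; exact Hi). reflexivity.
Qed.

End Extension.

(** * Soundness of AX^inf *)

Fixpoint holds (sg : nat -> nat -> bool) (i : nat) (f : form) : Prop :=
  match f with
  | Var n => sg i n = true
  | Neg a => ~ holds sg i a
  | And a b => holds sg i a /\ holds sg i b
  | Next a => holds sg (S i) a
  | Until a b => exists j, i <= j /\ holds sg j b /\ forall k, i <= k -> k < j -> holds sg k a
  end.

Lemma holds_pval sg i f :
  pval (fun g => if excluded_middle_informative (holds sg i g) then true else false) f = true
  <-> holds sg i f.
Proof.
  induction f; simpl; try (destruct excluded_middle_informative; split; auto; congruence).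
  - rewrite negb_true_iff, <- not_true_iff_false, IHf. tauto.
  - rewrite andb_true_iff, IHf1, IHf2. tauto.
Qed.

Lemma holds_Imp sg i a b : holds sg i (Imp a b) <-> (holds sg i a -> holds sg i b).
Proof. simpl. split; [intros H Ha; apply NNPP; tauto | tauto]. Qed.

Lemma holds_Or sg i a b : holds sg i (Or a b) <-> holds sg i a \/ holds sg i b.
Proof. simpl. split; [intro H; apply NNPP; tauto | tauto]. Qed.

Lemma holds_Iff sg i a b : (holds sg i a <-> holds sg i b) -> holds sg i (Iff a b).
Proof. intro H. split; apply holds_Imp; apply H. Qed.

Lemma holds_WNext sg i a : holds sg i (WNext a) <-> holds sg (S i) a.
Proof. simpl. split; [intro H; apply NNPP; tauto | tauto]. Qed.

Lemma ax_inf_sound f : prov ext_inf f -> forall sg i, holds sg i f.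
Proof.
  induction 1; intros sg i.
  - apply holds_pval, H.
  - rewrite H. simpl. tauto.
  - exact (proj1 (holds_Imp sg i a b) (IHprov2 sg i) (IHprov1 sg i)).
  - apply holds_Imp. intros [H1 H2]. exact (proj1 (holds_Imp _ _ a b) H2 H1).
  - apply holds_Iff. rewrite holds_Or. cbn [holds]. rewrite holds_WNext. cbn [holds]. split.
    + intros [j [Hj [Hb Ha]]]. destruct (Nat.eq_dec i j) as [-> | Hne]; [tauto |].
      right. split; [apply Ha; lia |]. exists j. repeat split; auto; try lia. intros; apply Ha; lia.
    + intros [Hb | [Ha [j [Hj [Hb Hk]]]]].
      * exists i. repeat split; auto. intros; lia.
      * exists j. repeat split; auto; try lia. intros k Hk1 Hk2.
        destruct (Nat.eq_dec k i) as [-> |]; auto. apply Hk; lia.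
  - apply holds_Iff. rewrite holds_Or, holds_WNext. unfold ffalse. cbn [holds].
    split; [tauto |]. intros [H | H]; [| exact H]. exfalso. apply H. unfold ftrue. cbn [holds]. tauto.
  - exact (IHprov sg (S i)).
  - apply holds_Imp. intros Hc [j [Hj [Hb _]]].
    assert (G : forall m, holds sg (i + m) c).
    { induction m as [|m IH]; [rewrite Nat.add_0_r; exact Hc |].
      destruct (proj1 (holds_Imp sg (i + m) c _) (IHprov sg (i + m)) IH) as [_ Hn].
      rewrite Nat.add_succ_r. exact Hn. }
    destruct (proj1 (holds_Imp sg j c _) (IHprov sg j) ltac:(replace j with (i + (j - i)) by lia; apply G))
      as [Hnb _].
    contradiction.
Qed.

Lemma ax_inf_consistent : ~ prov ext_inf ffalse.
Proof. intro H. apply (ax_inf_sound _ H (fun _ _ => true) 0). unfold ftrue. cbn [holds]. tauto. Qed.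

Lemma atom_inf_not_Next_false phi V : atom ext_inf phi V -> ~ In (Next ffalse) V.
Proof.
  intro HV. apply (atom_not_mem_of_refuted ext_inf phi V _ HV).
  assert (H : prov ext_inf (Neg (Next ffalse))) by (apply Ax_Ext; reflexivity).
  taut_from [Neg (Next ffalse)]. bool_cases.
Qed.

Lemma atom_fin_Ev_Next_false phi V : atom ext_fin phi V -> In (Until ftrue (Next ffalse)) V.
Proof.
  intro HV. apply (atom_mem_of_prov ext_fin phi V _ HV); [left; apply Cl_fin |].
  assert (H : prov ext_fin (Until ftrue (Next ffalse))) by (apply Ax_Ext; reflexivity).
  taut_from [Until ftrue (Next ffalse)]. bool_cases.
Qed.

Lemma fchain_nil ext phi : fchain ext phi [].
Proof. split; simpl; intros; lia. Qed.

Lemma facceptable_nil : facceptable [].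
Proof. intros i a b Hi; simpl in Hi; lia. Qed.

Lemma gen_chain_extensible phi c : fchain ext_gen phi c ->
  (exists d, fchain ext_gen phi d /\ facceptable d /\ fprefix c d) \/
  (exists s, ichain ext_gen phi s /\ iacceptable s /\ iprefix c s).
Proof.
  intro Hc. destruct c as [|U c].
  { left. exists []. split; [apply fchain_nil | split; [apply facceptable_nil | exists []; reflexivity]]. }
  destruct (classic (exists d y, fchain ext_gen phi d /\ fprefix (U :: c) d /\ In y d /\ In (Next ffalse) y))
    as [[d [y [Hd [Hcd [Hy Hf]]]]] | Hno].
  - left. exists d. split; [exact Hd | split; [| exact Hcd]].
    destruct (In_nth d y [] Hy) as [i [Hi <-]]. exact (fchain_Next_false_acceptable _ _ d i Hd Hi Hf).
  - right. destruct (atoms_cover ext_gen phi) as [A [HA HD]].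
    apply (fchain_extend_infinite _ _ A HA HD); [exact Hc | discriminate |].
    intros d y Hd Hcd Hy Hf. apply Hno. exists d, y. split; [| split; [| split]]; assumption.
Qed.

Lemma inf_chain_extensible phi c : fchain ext_inf phi c ->
  exists s, ichain ext_inf phi s /\ iacceptable s /\ iprefix c s.
Proof.
  intro Hc. destruct (atoms_cover ext_inf phi) as [A [HA HD]].
  assert (Hno : forall c', fchain ext_inf phi c' -> c' <> [] ->
            exists s, ichain ext_inf phi s /\ iacceptable s /\ iprefix c' s).
  { intros c' Hc' Hne. apply (fchain_extend_infinite _ _ A HA HD); auto.
    intros d y Hd _ Hy. destruct (In_nth d y [] Hy) as [i [Hi <-]].
    exact (atom_inf_not_Next_false phi _ (fchain_atom _ _ d i Hd Hi)). }
  destruct c as [|U c]; [| apply Hno; auto; discriminate].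
  destruct A as [|U A]; [exfalso; exact (ax_inf_consistent HD) |].
  destruct (Hno [U]) as [s [Hs [Has _]]]; [apply fchain_singleton, HA; left; reflexivity | discriminate |].
  exists s. split; [exact Hs | split; [exact Has |]]. intros i Hi; simpl in Hi; lia.
Qed.

Lemma fin_chain_extensible phi c : fchain ext_fin phi c ->
  exists d, fchain ext_fin phi d /\ facceptable d /\ fprefix c d.
Proof.
  intro Hc. destruct (classic (c = [])) as [-> | Hne].
  { exists []. split; [apply fchain_nil | split; [apply facceptable_nil | exists []; reflexivity]]. }
  destruct (exists_last Hne) as [e [x ->]].
  assert (Hx := fchain_last_atom ext_fin phi e x Hc).
  destruct (atoms_cover ext_fin phi) as [A [HA HD]].
  destruct (atom_until_fulfillable _ _ A HA HD x _ _ Hx (atom_fin_Ev_Next_false phi x Hx))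
    as [p [Hp [j [_ [Hj [Hf _]]]]]].
  assert (Hd : fchain ext_fin phi (e ++ x :: p)) by (apply fchain_app_cons; auto).
  exists (e ++ x :: p). split; [exact Hd | split].
  - apply (fchain_Next_false_acceptable _ _ _ (length e + j) Hd); [rewrite length_app; lia |].
    rewrite app_nth2 by lia. replace (length e + j - length e) with j by lia. exact Hf.
  - exists p. rewrite <- app_assoc. reflexivity.
Qed.

Theorem lemma1 (phi : form) :
  (* (f) *)
  (forall c, fchain ext_gen phi c ->
     (exists d, fchain ext_gen phi d /\ facceptable d /\ fprefix c d) \/
     (exists s, ichain ext_gen phi s /\ iacceptable s /\ iprefix c s)) /\
  (* (g) *)
  (forall c, fchain ext_inf phi c ->
     exists s, ichain ext_inf phi s /\ iacceptable s /\ iprefix c s) /\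
  (* (h) *)
  (forall c, fchain ext_fin phi c ->
     exists d, fchain ext_fin phi d /\ facceptable d /\ fprefix c d).
Proof.
  split; [| split].
  - apply gen_chain_extensible.
  - apply inf_chain_extensible.
  - apply fin_chain_extensible.
Qed.
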